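(* In Model A below with $d$ odd, let $I:=-\inf_{t\in\mathbb{R}}\log\big(\varrho(1-\varrho)e^{t}+\tfrac12+\tfrac12(1-2\varrho+2\varrho^2)e^{-t}\big)$ and $\tilde I:=-\inf_{t\in\mathbb{R}}\log\big((\varrho(1-\varrho)+\tfrac14)e^{t}+(\tfrac12(1-2\varrho+2\varrho^2)+\tfrac14)e^{-t}\big)$. Then $$\lim_{d\to\infty,\ d\text{ odd}}\frac1d\log\mathbb{P}\big(\chi(w)=2\text{ under the $c$-segmentation rule with }c=d\big)=-\tilde I,$$ and $I\ge\tilde I$.
   Context: Segmentation rule. Let $d,c$ be positive integers with $c\mid d$. For $x\in\mathbb{R}^d$ and $1\le j\le c$ let $x_j\in\mathbb{R}^{d/c}$ denote its $j$-th block $(x_{(j-1)d/c+1},\dots,x_{jd/c})$, so that $x=x_1\circ\cdots\circ x_c$ (concatenation). Given dictionary words $w^1,\dots,w^K\in\mathbb{R}^d$ ($w^k$ representing class $k$) and a test word $w\in\mathbb{R}^d$, for each $j$ let $U_j\in\{1,\dots,K\}$ be an index $k$ minimizing the Euclidean distance $\|w_j-w^k_j\|$ in $\mathbb{R}^{d/c}$, chosen uniformly at random among all minimizers (independently of everything else). The $c$-segmentation rule assigns to $w$ the class $\chi(w)\in\operatorname{argmax}_k\#\{j:U_j=k\}$, chosen uniformly at random among all maximizers. The case $c=1$ is the Euclidean (nearest-neighbour) rule and $c=d$ is coordinate-by-coordinate comparison. Probabilities are over all random objects including tie-breaks. Model A. Fix $\varrho\in(0,\tfrac12)$. Let $m_1,m_2$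 be independent and uniformly distributed on $\{-1,+1\}^d$. Let $Y^{(0)},Y^{(1)},Y^{(2)}$ be independent random vectors in $\{-1,+1\}^d$, independent of $m_1,m_2$, each with i.i.d. coordinates satisfying $\mathbb{P}(Y_i=1)=1-\varrho$, $\mathbb{P}(Y_i=-1)=\varrho$. Write $x\times y$ for the coordinatewise product. There are $K=2$ classes; the dictionary words are $w^1=Y^{(1)}\times m_1$ (class 1) and $w^2=Y^{(2)}\times m_2$ (class 2), and the test word is $w=Y^{(0)}\times m_1$ (true class 1). *)

From Stdlib Require Import Reals List.
Import ListNotations.
Open Scope R_scope.

(* All lists of booleans of length n: an enumeration of {-1,+1}^n
   (true encodes +1, false encodes -1). *)
Fixpoint bitlists (n : nat) : list (list bool) :=
  match n with
  | O => [nil]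
  | S n' => flat_map (fun l => [true :: l; false :: l]) (bitlists n')
  end.

Fixpoint tuples (n : nat) (s : list nat) : list (list nat) :=
  match n with
  | O => [nil]
  | S n' => flat_map (fun l => map (fun k => k :: l) s) (tuples n' s)
  end.

Definition sgn (b : bool) : R := if b then 1 else -1.

Definition to_vec (v : list bool) : list R := map sgn v.

Definition cprod (x y : list R) : list R :=
  map (fun p => fst p * snd p) (combine x y).

Definition sumR (l : list R) : R := fold_right Rplus 0 l.
Definition prodR (l : list R) : R := fold_right Rmult 1 l.

Definition euclid (x y : list R) : R :=
  sqrt (sumR (map (fun p => (fst p - snd p) ^ 2) (combine x y))).

(* j-th block (j = 1..c) of x in R^d: coordinates (j-1)d/c+1 .. jd/c *)
Definition block (d c j : nat) (x : list R) : list R :=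
  firstn (d / c) (skipn ((j - 1) * (d / c)) x).

Definition Rleb (a b : R) : bool := if Rle_dec a b then true else false.

Definition argmin_set (K : nat) (f : nat -> R) : list nat :=
  filter (fun k => forallb (fun k' => Rleb (f k) (f k')) (seq 1 K)) (seq 1 K).
Definition argmax_set (K : nat) (f : nat -> R) : list nat :=
  filter (fun k => forallb (fun k' => Rleb (f k') (f k)) (seq 1 K)) (seq 1 K).

Definition unif_pick (S : list nat) (k : nat) : R :=
  if existsb (Nat.eqb k) S then / INR (length S) else 0.

(* Dictionary dict = [w^1; ...; w^K] (w^k represents class k).
   Probability (over the tie-breaks) that the c-segmentation rule assigns
   class k to the test word w.  U = (U_1,...,U_c) ranges over {1..K}^c; the
   U_j are independent, U_j uniform on the minimizers of ||w_j - w^k_j||;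
   chi is then uniform on the maximizers of #{j : U_j = k}. *)
Definition seg_prob (d c : nat) (dict : list (list R)) (w : list R) (k : nat) : R :=
  let K := length dict in
  let dist j k' := euclid (block d c j w) (block d c j (nth (k' - 1) dict nil)) in
  sumR (map (fun u : list nat =>
      prodR (map (fun j => unif_pick (argmin_set K (dist j)) (nth (j - 1) u 0%nat))
                 (seq 1 c))
      * unif_pick (argmax_set K (fun k' => INR (count_occ Nat.eq_dec u k'))) k)
    (tuples c (seq 1 K))).

Definition unif_weight (m : list bool) : R := prodR (map (fun _ : bool => / 2) m).
Definition Y_weight (rho : R) (y : list bool) : R :=
  prodR (map (fun b : bool => if b then 1 - rho else rho) y).

(* Model A: P(chi(w) = 2) under the c-segmentation rule, where
   w^1 = Y1 x m1, w^2 = Y2 x m2, w = Y0 x m1, all independent. *)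
Definition modelA_prob_class2 (rho : R) (d c : nat) : R :=
  sumR (map (fun m1 : list bool => sumR (map (fun m2 : list bool =>
  sumR (map (fun y0 : list bool => sumR (map (fun y1 : list bool => sumR (map (fun y2 : list bool =>
    unif_weight m1 * unif_weight m2 * Y_weight rho y0 * Y_weight rho y1
      * Y_weight rho y2
    * seg_prob d c
        [cprod (to_vec y1) (to_vec m1); cprod (to_vec y2) (to_vec m2)]
        (cprod (to_vec y0) (to_vec m1)) 2)
  (bitlists d))) (bitlists d))) (bitlists d))) (bitlists d))) (bitlists d)).

Definition is_inf (E : R -> Prop) (m : R) : Prop :=
  (forall x, E x -> m <= x) /\ (forall b, (forall x, E x -> b <= x) -> b <= m).

Definition rate_I_fun (rho t : R) : R :=
  ln (rho * (1 - rho) * exp t + / 2 + / 2 * (1 - 2 * rho + 2 * rho ^ 2) * exp (- t)).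
Definition rate_It_fun (rho t : R) : R :=
  ln ((rho * (1 - rho) + / 4) * exp t
      + (/ 2 * (1 - 2 * rho + 2 * rho ^ 2) + / 4) * exp (- t)).

From Stdlib Require Import Reals List Lra Lia Binomial ZArith.
Import ListNotations.
Open Scope R_scope.

(* With c = d every coordinate casts its own vote, and the votes are independent.
   The test coordinate agrees with that of w^1 with probability 1 - 2 rho (1 - rho),
   while w^2 carries an independent fair sign, so (ties being split evenly) a
   coordinate votes for class 2 with probability p = rho (1 - rho) + 1/4 < 1/2.
   Thus P(chi(w) = 2) is the probability that a Binomial(d, p) count exceeds d/2.
   The Chernoff bound with tilt E = sqrt((1 - p)/p) bounds it by (2 sqrt(p (1 - p)))^d,
   and the single binomial term at (d + 1)/2 together with C(2n+1, n+1) >= 4^n/(n+1)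
   matches this up to a polynomial factor.  The rate log(2 sqrt(p (1 - p))) is -It,
   the infimum of log(p e^t + (1 - p) e^-t) being attained at e^t = E.  Finally the
   two rate functions differ pointwise by (e^t + e^-t)/4 - 1/2 >= 0. *)

(** * Finite sums *)

Lemma sumR_app (l1 l2 : list R) : sumR (l1 ++ l2) = sumR l1 + sumR l2.
Proof. induction l1 as [|a l1 IH]; simpl; [ring | rewrite IH; ring]. Qed.

Lemma sumR_ext_in {A} (f g : A -> R) (l : list A) :
  (forall x, In x l -> f x = g x) -> sumR (map f l) = sumR (map g l).
Proof. intros H; now rewrite (map_ext_in f g l H). Qed.

Lemma sumR_const0 {A} (l : list A) : sumR (map (fun _ => 0) l) = 0.
Proof. induction l as [|a l IH]; simpl; [ring | rewrite IH; ring]. Qed.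

Lemma sumR_scal_l {A} (c : R) (f : A -> R) (l : list A) :
  sumR (map (fun x => c * f x) l) = c * sumR (map f l).
Proof. induction l as [|a l IH]; simpl; [ring | rewrite IH; ring]. Qed.

Lemma sumR_scal_r {A} (c : R) (f : A -> R) (l : list A) :
  sumR (map (fun x => f x * c) l) = sumR (map f l) * c.
Proof. induction l as [|a l IH]; simpl; [ring | rewrite IH; ring]. Qed.

Lemma sumR_plus {A} (f g : A -> R) (l : list A) :
  sumR (map (fun x => f x + g x) l) = sumR (map f l) + sumR (map g l).
Proof. induction l as [|a l IH]; simpl; [ring | rewrite IH; ring]. Qed.

Lemma sumR_comm {A B} (f : A -> B -> R) (la : list A) (lb : list B) :
  sumR (map (fun x => sumR (map (f x) lb)) la)
  = sumR (map (fun y => sumR (map (fun x => f x y) la)) lb).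
Proof.
  induction la as [|a la IH]; simpl.
  - symmetry; apply sumR_const0.
  - now rewrite IH, sumR_plus.
Qed.

Lemma sumR_comm_ext {A B} (g : A -> R) (f : A -> B -> R) (la : list A) (lb : list B) :
  (forall x, In x la -> g x = sumR (map (f x) lb)) ->
  sumR (map g la) = sumR (map (fun y => sumR (map (fun x => f x y) la)) lb).
Proof. intros H. rewrite (sumR_ext_in _ _ _ H). apply sumR_comm. Qed.

Lemma sumR_le {A} (f g : A -> R) (l : list A) :
  (forall x, In x l -> f x <= g x) -> sumR (map f l) <= sumR (map g l).
Proof.
  induction l as [|a l IH]; simpl; intros H; [lra |].
  apply Rplus_le_compat; auto.
Qed.

Lemma prodR_mult {A} (f g : A -> R) (l : list A) :
  prodR (map (fun x => f x * g x) l) = prodR (map f l) * prodR (map g l).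
Proof. induction l as [|a l IH]; simpl; [ring | rewrite IH; ring]. Qed.

Lemma prodR_nonneg {A} (f : A -> R) (l : list A) :
  (forall x, 0 <= f x) -> 0 <= prodR (map f l).
Proof. intros H; induction l; simpl; [lra | apply Rmult_le_pos; auto]. Qed.

Lemma bitlists_length (n : nat) (l : list bool) : In l (bitlists n) -> length l = n.
Proof.
  revert l; induction n as [|n IH]; simpl; intros l Hl.
  - now destruct Hl as [<- | []].
  - apply in_flat_map in Hl as [l' [Hl' Hl]].
    destruct Hl as [<- | [<- | []]]; simpl; f_equal; auto.
Qed.

Lemma tuples_spec (n : nat) (s u : list nat) :
  In u (tuples n s) -> length u = n /\ incl u s.
Proof.
  revert u; induction n as [|n IH]; simpl; intros u Hu.
  - destruct Hu as [<- | []]; split; [reflexivity | intros k []].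
  - apply in_flat_map in Hu as [u' [Hu' Hu]].
    apply in_map_iff in Hu as [k [<- Hk]].
    destruct (IH u' Hu') as [Hlen Hincl].
    split; [simpl; f_equal; exact Hlen | now apply incl_cons].
Qed.

Lemma sum_tuples_S (n : nat) (s : list nat) (F : list nat -> R) :
  sumR (map F (tuples (S n) s)) =
  sumR (map (fun u => sumR (map (fun k => F (k :: u)) s)) (tuples n s)).
Proof.
  simpl. generalize (tuples n s) as L. induction L as [|u L IH]; simpl; [ring |].
  now rewrite map_app, sumR_app, IH, map_map.
Qed.

Lemma sum_tuples_prodR (f : nat -> R) (s : list nat) (n : nat) :
  sumR (map (fun u => prodR (map f u)) (tuples n s)) = sumR (map f s) ^ n.
Proof.
  induction n as [|n IH]; simpl; [ring |].
  rewrite <- IH. clear IH. generalize (tuples n s) as L.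
  induction L as [|u L IH]; simpl; [ring |].
  rewrite map_app, sumR_app, IH, map_map; simpl.
  rewrite (sumR_scal_r (prodR (map f u)) f s). ring.
Qed.

Definition sum_bit (f : bool -> R) : R := f true + f false.
Definition sum_bits (n : nat) (F : list bool -> R) : R := sumR (map F (bitlists n)).

Lemma sum_bits_S (n : nat) (F : list bool -> R) :
  sum_bits (S n) F = sum_bit (fun b => sum_bits n (fun l => F (b :: l))).
Proof.
  unfold sum_bits, sum_bit; simpl. generalize (bitlists n) as L.
  induction L as [|l L IH]; simpl; [ring | rewrite IH; ring].
Qed.

Lemma sum_bits_S_mul (n : nat) (F G : list bool -> R) (f : bool -> R) :
  (forall b l, F (b :: l) = f b * G l) -> sum_bits (S n) F = sum_bit f * sum_bits n G.
Proof.
  intros HF. rewrite sum_bits_S. unfold sum_bit, sum_bits.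
  rewrite (sumR_ext_in (fun l => F (true :: l)) (fun l => f true * G l)) by (intros; apply HF).
  rewrite (sumR_ext_in (fun l => F (false :: l)) (fun l => f false * G l)) by (intros; apply HF).
  rewrite !sumR_scal_l. ring.
Qed.

Section FiveFold.
Variable n : nat.

Definition sum_bits5 (F : list bool -> list bool -> list bool -> list bool -> list bool -> R) : R :=
  sum_bits n (fun l1 => sum_bits n (fun l2 => sum_bits n (fun l3 =>
    sum_bits n (fun l4 => sum_bits n (F l1 l2 l3 l4))))).

Lemma sum_bits5_scal_r F c :
  sum_bits5 (fun l1 l2 l3 l4 l5 => F l1 l2 l3 l4 l5 * c) = sum_bits5 F * c.
Proof.
  unfold sum_bits5, sum_bits. rewrite <- sumR_scal_r.
  repeat (apply sumR_ext_in; intros; rewrite <- sumR_scal_r). reflexivity.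
Qed.

Lemma sum_bits5_sumR_comm {A} (T : list A) H :
  sum_bits5 (fun l1 l2 l3 l4 l5 => sumR (map (H l1 l2 l3 l4 l5) T))
  = sumR (map (fun u => sum_bits5 (fun l1 l2 l3 l4 l5 => H l1 l2 l3 l4 l5 u)) T).
Proof.
  unfold sum_bits5, sum_bits.
  do 5 (apply sumR_comm_ext; intros). reflexivity.
Qed.
End FiveFold.

Lemma sum_bits5_S_mul n F G f :
  (forall b1 l1 b2 l2 b3 l3 b4 l4 b5 l5,
      F (b1 :: l1) (b2 :: l2) (b3 :: l3) (b4 :: l4) (b5 :: l5)
      = f b1 b2 b3 b4 b5 * G l1 l2 l3 l4 l5) ->
  sum_bits5 (S n) F
  = sum_bit (fun b1 => sum_bit (fun b2 => sum_bit (fun b3 => sum_bit (fun b4 =>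
      sum_bit (f b1 b2 b3 b4))))) * sum_bits5 n G.
Proof.
  intros HF. unfold sum_bits5.
  repeat (apply sum_bits_S_mul; intros). apply HF.
Qed.

(** * The segmentation rule with one coordinate per block *)

(* The law of U_j when c = d and the j-th coordinates of w, w^1, w^2 are a, a1, a2. *)
Definition vote_weight (a a1 a2 : R) (k : nat) : R :=
  unif_pick (argmin_set 2 (fun k' => euclid [a] (nth (k' - 1) [[a1]; [a2]] nil))) k.

Fixpoint votes_weight (w x1 x2 : list R) (u : list nat) : R :=
  match u, w, x1, x2 with
  | k :: u', a :: w', a1 :: x1', a2 :: x2' =>
      vote_weight a a1 a2 k * votes_weight w' x1' x2' u'
  | _, _, _, _ => 1
  end.

Definition count_votes (u : list nat) (k : nat) : nat := count_occ Nat.eq_dec u k.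

Definition class2_given_votes (u : list nat) : R :=
  unif_pick (argmax_set 2 (fun k => INR (count_votes u k))) 2.

Lemma Rleb_true (a b : R) : a <= b -> Rleb a b = true.
Proof. intros H; unfold Rleb; destruct Rle_dec; [reflexivity | lra]. Qed.

Lemma Rleb_false (a b : R) : b < a -> Rleb a b = false.
Proof. intros H; unfold Rleb; destruct Rle_dec; [lra | reflexivity]. Qed.

Lemma argmin_set2_ext (f g : nat -> R) :
  f 1%nat = g 1%nat -> f 2%nat = g 2%nat -> argmin_set 2 f = argmin_set 2 g.
Proof. intros H1 H2. unfold argmin_set; simpl. now rewrite H1, H2. Qed.

Lemma block_diag (d j : nat) (x : list R) :
  (1 <= d)%nat -> block d d j x = firstn 1 (skipn (j - 1) x).
Proof. intros Hd. unfold block. now rewrite Nat.div_same, Nat.mul_1_r by lia. Qed.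

Lemma prodR_coord_votes (n : nat) (w x1 x2 : list R) (u : list nat) :
  length w = n -> length x1 = n -> length x2 = n -> length u = n ->
  prodR (map (fun j => unif_pick (argmin_set 2 (fun k =>
             euclid (firstn 1 (skipn (j - 1) w))
                    (firstn 1 (skipn (j - 1) (nth (k - 1) [x1; x2] nil)))))
           (nth (j - 1) u 0%nat)) (seq 1 n))
  = votes_weight w x1 x2 u.
Proof.
  revert w x1 x2 u; induction n as [|n IH]; intros w x1 x2 u Hw H1 H2 Hu.
  - destruct u; [now destruct w, x1, x2 | discriminate].
  - destruct w as [|a w], x1 as [|a1 x1], x2 as [|a2 x2], u as [|k u]; try discriminate.
    simpl in *. rewrite <- (IH w x1 x2 u) by lia. f_equal.
    rewrite <- seq_shift, map_map. f_equal. apply map_ext_in. intros j Hj.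
    apply in_seq in Hj. destruct j as [|j]; [lia |].
    simpl. now rewrite Nat.sub_0_r.
Qed.

Lemma seg_prob_diag (d : nat) (w x1 x2 : list R) :
  (1 <= d)%nat -> length w = d -> length x1 = d -> length x2 = d ->
  seg_prob d d [x1; x2] w 2 =
  sumR (map (fun u => votes_weight w x1 x2 u * class2_given_votes u) (tuples d [1%nat; 2%nat])).
Proof.
  intros Hd Hw H1 H2. unfold seg_prob. simpl length.
  apply sumR_ext_in. intros u Hu. apply tuples_spec in Hu as [Hu _].
  f_equal. rewrite <- (prodR_coord_votes d w x1 x2 u) by assumption.
  f_equal. apply map_ext. intros j. f_equal.
  apply argmin_set2_ext; now rewrite !block_diag.
Qed.

(** * Model A as independent coordinate votes *)

Lemma sgn_mul (a b : bool) : sgn a * sgn b = sgn (Bool.eqb a b).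
Proof. destruct a, b; unfold sgn; simpl; ring. Qed.

Lemma euclid_sgn (a b : bool) : euclid [sgn a] [sgn b] = if Bool.eqb a b then 0 else 2.
Proof.
  destruct a, b; unfold euclid, sgn; simpl;
    match goal with |- sqrt ?x = ?v => replace x with (v * v) by ring end;
    apply sqrt_square; lra.
Qed.

(* [agree1] ([agree2]) says whether the test coordinate equals that of w^1 (w^2). *)
Definition vote_law (agree1 agree2 : bool) (k : nat) : R :=
  match k with
  | 1%nat => if agree1 then (if agree2 then / 2 else 1) else (if agree2 then 0 else / 2)
  | 2%nat => if agree2 then (if agree1 then / 2 else 1) else (if agree1 then 0 else / 2)
  | _ => 0
  end.

Lemma vote_weight_sgn (a b c : bool) (k : nat) :
  vote_weight (sgn a) (sgn b) (sgn c) k = vote_law (Bool.eqb a b) (Bool.eqb a c) k.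
Proof.
  unfold vote_weight.
  rewrite (argmin_set2_ext _ (fun k' => if Nat.eqb k' 1 then euclid [sgn a] [sgn b]
                                        else euclid [sgn a] [sgn c])) by reflexivity.
  rewrite !euclid_sgn.
  destruct (Bool.eqb a b), (Bool.eqb a c); unfold argmin_set; simpl;
    rewrite ?(Rleb_true 0 0), ?(Rleb_true 0 2), ?(Rleb_true 2 2), ?(Rleb_false 2 0) by lra;
    unfold unif_pick; destruct k as [|[|[|k]]]; simpl; try field; reflexivity.
Qed.

Definition vote_p (rho : R) : R := rho * (1 - rho) + / 4.
Definition vote_prob (p : R) (k : nat) : R := if Nat.eqb k 2 then p else 1 - p.
Definition bern (rho : R) (b : bool) : R := if b then 1 - rho else rho.

Definition coord_weight (rho : R) (k : nat) (m1 m2 y0 y1 y2 : bool) : R :=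
  / 2 * / 2 * bern rho y0 * bern rho y1 * bern rho y2
  * vote_weight (sgn y0 * sgn m1) (sgn y1 * sgn m1) (sgn y2 * sgn m2) k.

Lemma sum_coord_weight (rho : R) (k : nat) : In k [1%nat; 2%nat] ->
  sum_bit (fun m1 => sum_bit (fun m2 => sum_bit (fun y0 => sum_bit (fun y1 =>
    sum_bit (coord_weight rho k m1 m2 y0 y1)))))
  = vote_prob (vote_p rho) k.
Proof.
  intros Hk. unfold sum_bit, coord_weight. rewrite !sgn_mul, !vote_weight_sgn.
  unfold vote_prob, vote_p, bern. destruct Hk as [<- | [<- | []]]; simpl; field.
Qed.

Definition modelA_weight (rho : R) (u : list nat) (m1 m2 y0 y1 y2 : list bool) : R :=
  unif_weight m1 * unif_weight m2 * Y_weight rho y0 * Y_weight rho y1 * Y_weight rho y2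
  * votes_weight (cprod (to_vec y0) (to_vec m1)) (cprod (to_vec y1) (to_vec m1))
                 (cprod (to_vec y2) (to_vec m2)) u.

Lemma sum_bits5_modelA_weight (rho : R) (n : nat) (u : list nat) :
  length u = n -> incl u [1%nat; 2%nat] ->
  sum_bits5 n (modelA_weight rho u) = prodR (map (vote_prob (vote_p rho)) u).
Proof.
  revert u; induction n as [|n IH]; intros u Hlen Hu.
  - destruct u; [| discriminate].
    unfold sum_bits5, sum_bits, modelA_weight; simpl.
    unfold unif_weight, Y_weight; simpl; ring.
  - destruct u as [|k u]; [discriminate |].
    rewrite (sum_bits5_S_mul n _ (modelA_weight rho u) (coord_weight rho k)).
    + apply incl_cons_inv in Hu as [Hk Hu]. simpl.
      rewrite IH, sum_coord_weight by (simpl in Hlen; auto). reflexivity.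
    + intros. unfold modelA_weight, coord_weight, unif_weight, Y_weight, cprod, bern.
      simpl. ring.
Qed.

Lemma cprod_length (x y : list R) : length (cprod x y) = Nat.min (length x) (length y).
Proof. unfold cprod. now rewrite length_map, length_combine. Qed.

Definition class2_prob (p : R) (d : nat) : R :=
  sumR (map (fun u => prodR (map (vote_prob p) u) * class2_given_votes u)
            (tuples d [1%nat; 2%nat])).

Lemma modelA_prob_class2_diag (rho : R) (d : nat) :
  (1 <= d)%nat -> modelA_prob_class2 rho d d = class2_prob (vote_p rho) d.
Proof.
  intros Hd.
  transitivity (sum_bits5 d (fun m1 m2 y0 y1 y2 =>
     sumR (map (fun u => modelA_weight rho u m1 m2 y0 y1 y2 * class2_given_votes u)
               (tuples d [1%nat; 2%nat])))).
  - unfold modelA_prob_class2, sum_bits5, sum_bits.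
    do 5 (apply sumR_ext_in; intros ? ?%bitlists_length).
    rewrite seg_prob_diag by (rewrite ?cprod_length; unfold to_vec; rewrite ?length_map; lia).
    rewrite <- sumR_scal_l. apply sumR_ext_in; intros u _. unfold modelA_weight. ring.
  - rewrite sum_bits5_sumR_comm. apply sumR_ext_in; intros u Hu.
    apply tuples_spec in Hu as [Hlen Hu].
    now rewrite sum_bits5_scal_r, sum_bits5_modelA_weight.
Qed.

(** * Majority among independent votes *)

Lemma count_votes_cons (u : list nat) (k j : nat) :
  count_votes (k :: u) j = ((if Nat.eqb k j then 1 else 0) + count_votes u j)%nat.
Proof.
  unfold count_votes; simpl. destruct (Nat.eq_dec k j) as [-> | Hkj].
  - now rewrite Nat.eqb_refl.
  - now apply Nat.eqb_neq in Hkj as ->.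
Qed.

Lemma count_votes_total (u : list nat) :
  incl u [1%nat; 2%nat] -> (count_votes u 1 + count_votes u 2 = length u)%nat.
Proof.
  induction u as [|k u IH]; intros Hu; [reflexivity |].
  apply incl_cons_inv in Hu as [Hk Hu].
  rewrite !count_votes_cons; simpl. rewrite <- IH by assumption.
  destruct Hk as [<- | [<- | []]]; simpl; lia.
Qed.

Lemma class2_given_votes_win (u : list nat) :
  (count_votes u 1 < count_votes u 2)%nat -> class2_given_votes u = 1.
Proof.
  intros H%lt_INR. unfold class2_given_votes, argmax_set; simpl.
  set (c1 := INR (count_votes u 1)) in *; set (c2 := INR (count_votes u 2)) in *.
  rewrite (Rleb_true c1 c1), (Rleb_true c2 c2), (Rleb_true c1 c2), (Rleb_false c2 c1) by lra.
  unfold unif_pick; simpl. lra.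
Qed.

Lemma class2_given_votes_lose (u : list nat) :
  (count_votes u 2 < count_votes u 1)%nat -> class2_given_votes u = 0.
Proof.
  intros H%lt_INR. unfold class2_given_votes, argmax_set; simpl.
  set (c1 := INR (count_votes u 1)) in *; set (c2 := INR (count_votes u 2)) in *.
  rewrite (Rleb_true c1 c1), (Rleb_true c2 c2), (Rleb_false c1 c2), (Rleb_true c2 c1) by lra.
  reflexivity.
Qed.

Lemma class2_given_votes_tie (u : list nat) :
  count_votes u 2 = count_votes u 1 -> class2_given_votes u = / 2.
Proof.
  intros H. unfold class2_given_votes, argmax_set; simpl.
  rewrite H, Rleb_true by lra. reflexivity.
Qed.

Lemma class2_given_votes_nonneg (u : list nat) : 0 <= class2_given_votes u.
Proof.
  destruct (Nat.lt_trichotomy (count_votes u 1) (count_votes u 2)) as [H | [H | H]].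
  - rewrite class2_given_votes_win by exact H; lra.
  - rewrite class2_given_votes_tie by auto; lra.
  - rewrite class2_given_votes_lose by exact H; lra.
Qed.

Lemma prodR_vote_prob_nonneg (p : R) (u : list nat) :
  0 <= p <= 1 -> 0 <= prodR (map (vote_prob p) u).
Proof. intros Hp; apply prodR_nonneg; intros k; unfold vote_prob; destruct Nat.eqb; lra. Qed.

Lemma C_n_0 (n : nat) : C n 0 = 1.
Proof. unfold C. rewrite Nat.sub_0_r. simpl. field. apply INR_fact_neq_0. Qed.

Lemma C_n_n (n : nat) : C n n = 1.
Proof. unfold C. rewrite Nat.sub_diag. simpl. field. apply INR_fact_neq_0. Qed.

Definition count2_prob (p : R) (n k : nat) : R :=
  sumR (map (fun u => prodR (map (vote_prob p) u)
                      * if Nat.eqb (count_votes u 2) k then 1 else 0)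
            (tuples n [1%nat; 2%nat])).

Lemma count2_prob_S (p : R) (n k : nat) :
  count2_prob p (S n) k =
  (1 - p) * count2_prob p n k + p * match k with O => 0 | S k' => count2_prob p n k' end.
Proof.
  unfold count2_prob. rewrite sum_tuples_S.
  transitivity (sumR (map (fun u =>
      (1 - p) * (prodR (map (vote_prob p) u) * if Nat.eqb (count_votes u 2) k then 1 else 0)
      + p * (prodR (map (vote_prob p) u)
             * match k with O => 0 | S k' => if Nat.eqb (count_votes u 2) k' then 1 else 0 end))
    (tuples n [1%nat; 2%nat]))).
  - apply sumR_ext_in; intros u _. cbn -[count_votes]. rewrite !count_votes_cons.
    unfold vote_prob, prodR; simpl. destruct k; simpl; ring.
  - rewrite sumR_plus, !sumR_scal_l. destruct k; [| reflexivity].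
    rewrite (sumR_ext_in (fun u => prodR (map (vote_prob p) u) * 0) (fun _ => 0)),
      sumR_const0 by (intros; ring).
    ring.
Qed.

Lemma count2_prob_binomial (p : R) (n k : nat) :
  count2_prob p n k = if Nat.leb k n then C n k * p ^ k * (1 - p) ^ (n - k) else 0.
Proof.
  revert k; induction n as [|n IH]; intros k.
  - unfold count2_prob; simpl. destruct k; simpl; [rewrite C_n_0 | ]; ring.
  - rewrite count2_prob_S, IH. destruct k as [|k].
    + rewrite !Nat.sub_0_r, !C_n_0. simpl. ring.
    + rewrite IH. destruct (Nat.lt_trichotomy k n) as [H | [<- | H]].
      * rewrite (proj2 (Nat.leb_le (S k) n)), (proj2 (Nat.leb_le k n)),
          (proj2 (Nat.leb_le (S k) (S n))) by lia.
        rewrite <- pascal by lia.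
        replace (n - k)%nat with (S (n - S k)) by lia.
        replace (S n - S k)%nat with (S (n - S k)) by lia.
        simpl. ring.
      * rewrite Nat.leb_refl, (proj2 (Nat.leb_gt (S k) k)), (proj2 (Nat.leb_le (S k) (S k))) by lia.
        rewrite !C_n_n, !Nat.sub_diag. simpl. ring.
      * rewrite (proj2 (Nat.leb_gt (S k) n)), (proj2 (Nat.leb_gt k n)),
          (proj2 (Nat.leb_gt (S k) (S n))) by lia.
        ring.
Qed.

Lemma C_odd_central_succ (n : nat) :
  C (2 * S n + 1) (S n + 1) = C (2 * n + 1) (n + 1) * (2 * (2 * INR n + 3) / (INR n + 2)).
Proof.
  unfold C.
  replace (2 * S n + 1)%nat with (S (S (2 * n + 1))) by lia.
  replace (S n + 1)%nat with (S (n + 1)) by lia.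
  replace (S (S (2 * n + 1)) - S (n + 1))%nat with (S n) by lia.
  replace (2 * n + 1 - (n + 1))%nat with n by lia.
  change (fact (S (S (2 * n + 1)))) with (S (S (2 * n + 1)) * fact (S (2 * n + 1)))%nat.
  change (fact (S (2 * n + 1))) with (S (2 * n + 1) * fact (2 * n + 1))%nat.
  change (fact (S (n + 1))) with (S (n + 1) * fact (n + 1))%nat.
  change (fact (S n)) with (S n * fact n)%nat.
  rewrite !mult_INR, !S_INR, !plus_INR, !mult_INR. simpl INR.
  pose proof (pos_INR n).
  field. repeat split; try apply INR_fact_neq_0; lra.
Qed.

Lemma C_odd_central_lower (n : nat) : 4 ^ n <= C (2 * n + 1) (n + 1) * (INR n + 1).
Proof.
  induction n as [|n IH].
  - unfold C; simpl. lra.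
  - rewrite C_odd_central_succ, S_INR.
    assert (HC : 0 <= C (2 * n + 1) (n + 1)).
    { unfold C. apply Rle_mult_inv_pos; [apply pos_INR |].
      apply Rmult_lt_0_compat; apply INR_fact_lt_0. }
    pose proof (pos_INR n).
    replace (C (2 * n + 1) (n + 1) * (2 * (2 * INR n + 3) / (INR n + 2)) * (INR n + 1 + 1))
      with (C (2 * n + 1) (n + 1) * (2 * (2 * INR n + 3))) by (field; lra).
    simpl pow. nra.
Qed.

Lemma count2_prob_majority_le (p : R) (n : nat) :
  0 <= p <= 1 -> count2_prob p (2 * n + 1) (n + 1) <= class2_prob p (2 * n + 1).
Proof.
  intros Hp. apply sumR_le. intros u [Hlen Hu]%tuples_spec.
  pose proof (prodR_vote_prob_nonneg p u Hp).
  destruct (Nat.eqb_spec (count_votes u 2) (n + 1)) as [Hwin | _].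
  - pose proof (count_votes_total u Hu).
    rewrite class2_given_votes_win by lia. lra.
  - pose proof (class2_given_votes_nonneg u). nra.
Qed.

Lemma class2_prob_lower (p : R) (n : nat) :
  0 <= p <= 1 -> p * (4 * p * (1 - p)) ^ n / (INR n + 1) <= class2_prob p (2 * n + 1).
Proof.
  intros Hp. eapply Rle_trans; [| now apply count2_prob_majority_le].
  rewrite count2_prob_binomial, (proj2 (Nat.leb_le (n + 1) (2 * n + 1))) by lia.
  replace (2 * n + 1 - (n + 1))%nat with n by lia.
  rewrite pow_add, pow_1, !Rpow_mult_distr.
  pose proof (C_odd_central_lower n). pose proof (pos_INR n).
  assert (0 <= p * (p ^ n * (1 - p) ^ n)) by (apply Rmult_le_pos, Rmult_le_pos; try apply pow_le; lra).
  apply (Rmult_le_reg_r (INR n + 1)); [lra |].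
  unfold Rdiv. rewrite Rmult_assoc, Rinv_l, Rmult_1_r by lra.
  replace (C (2 * n + 1) (n + 1) * (p ^ n * p) * (1 - p) ^ n * (INR n + 1))
    with (p * (p ^ n * (1 - p) ^ n) * (C (2 * n + 1) (n + 1) * (INR n + 1))) by ring.
  replace (p * (4 ^ n * p ^ n * (1 - p) ^ n))
    with (p * (p ^ n * (1 - p) ^ n) * 4 ^ n) by ring.
  now apply Rmult_le_compat_l.
Qed.

(* Chernoff: for E >= 1 the indicator of a class-2 majority is at most
   E ^ (#votes for 2 - #votes for 1). *)
Definition tilt (E : R) (k : nat) : R := if Nat.eqb k 2 then E else / E.

Lemma prodR_tilt (E : R) (u : list nat) : 0 < E -> incl u [1%nat; 2%nat] ->
  prodR (map (tilt E) u) * E ^ count_votes u 1 = E ^ count_votes u 2.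
Proof.
  intros HE. induction u as [|k u IH]; intros Hu; [simpl; ring |].
  apply incl_cons_inv in Hu as [Hk Hu]. specialize (IH Hu).
  rewrite !count_votes_cons.
  destruct Hk as [<- | [<- | []]]; unfold tilt in *; cbn -[count_votes] in *;
    rewrite <- IH; unfold prodR; field; lra.
Qed.

Lemma class2_given_votes_le_tilt (E : R) (u : list nat) : 1 <= E -> incl u [1%nat; 2%nat] ->
  class2_given_votes u <= prodR (map (tilt E) u).
Proof.
  intros HE Hu.
  assert (Hpow : 0 < E ^ count_votes u 1) by (apply pow_lt; lra).
  pose proof (prodR_tilt E u ltac:(lra) Hu) as Htilt.
  destruct (Nat.lt_trichotomy (count_votes u 1) (count_votes u 2)) as [H | [H | H]].
  - rewrite class2_given_votes_win by exact H.
    assert (E ^ count_votes u 1 <= E ^ count_votes u 2) by (apply Rle_pow; lia || lra).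
    nra.
  - rewrite class2_given_votes_tie by auto. rewrite H in Htilt, Hpow. nra.
  - rewrite class2_given_votes_lose by exact H.
    apply prodR_nonneg. intros k. unfold tilt.
    destruct Nat.eqb; [lra | left; apply Rinv_0_lt_compat; lra].
Qed.

Lemma class2_prob_upper_tilt (p E : R) (d : nat) : 0 <= p <= 1 -> 1 <= E ->
  class2_prob p d <= ((1 - p) / E + p * E) ^ d.
Proof.
  intros Hp HE. unfold class2_prob.
  apply Rle_trans with
    (sumR (map (fun u => prodR (map (fun k => vote_prob p k * tilt E k) u)) (tuples d [1%nat; 2%nat]))).
  - apply sumR_le. intros u [_ Hu]%tuples_spec.
    rewrite prodR_mult. apply Rmult_le_compat_l; [now apply prodR_vote_prob_nonneg |].
    now apply class2_given_votes_le_tilt.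
  - rewrite sum_tuples_prodR. right. f_equal.
    unfold vote_prob, tilt; simpl. field. lra.
Qed.

(* E = sqrt((1 - p)/p) minimises (1 - p)/E + p E. *)
Lemma balanced_tilt (p : R) : 0 < p < 1 ->
  (1 - p) / sqrt ((1 - p) / p) + p * sqrt ((1 - p) / p) = 2 * sqrt (p * (1 - p)).
Proof.
  intros Hp. set (E := sqrt ((1 - p) / p)).
  assert (HE2 : E * E = (1 - p) / p) by (apply sqrt_sqrt; apply Rle_mult_inv_pos; lra).
  assert (HE0 : 0 < E) by (apply sqrt_lt_R0, Rdiv_lt_0_compat; lra).
  assert (HpE : sqrt (p * (1 - p)) = p * E).
  { rewrite <- (sqrt_square (p * E)) by (apply Rmult_le_pos; lra). f_equal.
    replace (p * E * (p * E)) with (p * p * (E * E)) by ring. rewrite HE2. field. lra. }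
  rewrite HpE. replace (1 - p) with (p * (E * E)) at 1 by (rewrite HE2; field; lra).
  field. lra.
Qed.

Lemma class2_prob_upper (p : R) (d : nat) : 0 < p <= / 2 ->
  class2_prob p d <= (2 * sqrt (p * (1 - p))) ^ d.
Proof.
  intros Hp. rewrite <- balanced_tilt by lra.
  apply class2_prob_upper_tilt; [lra |].
  apply Rle_trans with (sqrt 1); [rewrite sqrt_1; lra | apply sqrt_le_1_alt].
  apply (Rmult_le_reg_r p); [lra |]. unfold Rdiv. rewrite Rmult_assoc, Rinv_l; lra.
Qed.

(** * The exponential rate *)

Lemma ln_le (a b : R) : 0 < a -> a <= b -> ln a <= ln b.
Proof. intros Ha [Hab | <-]; [left; now apply ln_increasing | right; reflexivity]. Qed.

Lemma ln_lt_2sqrt (x : R) : 0 < x -> ln x < 2 * sqrt x.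
Proof.
  intros Hx. assert (Hs : 0 < sqrt x) by now apply sqrt_lt_R0.
  rewrite <- (sqrt_sqrt x) at 1 by lra. rewrite ln_mult by exact Hs.
  pose proof (exp_ineq1_le (ln (sqrt x))). rewrite exp_ln in H by exact Hs. lra.
Qed.

Lemma Un_cv_squeeze (x e : nat -> R) (L : R) :
  (forall n, L - e n <= x n <= L) -> Un_cv e 0 -> Un_cv x L.
Proof.
  intros Hx He eps Heps. destruct (He eps Heps) as [N HN]. exists N. intros n Hn.
  specialize (HN n Hn). specialize (Hx n). unfold R_dist in *.
  rewrite Rminus_0_r in HN. apply Rabs_def2 in HN.
  rewrite Rabs_left1; lra.
Qed.

(* [ln (n+1) <= 2 sqrt (n+1)] while the denominator grows like [(sqrt (n+1))^2]. *)
Lemma Un_cv_ln_div_odd (c : R) :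
  Un_cv (fun n => (c + ln (INR n + 1)) / INR (2 * n + 1)) 0.
Proof.
  intros eps Heps.
  set (M := (Rabs c + 2) / eps).
  assert (HM : 0 < M) by (apply Rdiv_lt_0_compat; [pose proof (Rabs_pos c) |]; lra).
  destruct (archimed (M * M)) as [Hup _].
  assert (Hz : (0 <= up (M * M))%Z) by (apply le_IZR; simpl; nra).
  exists (Z.to_nat (up (M * M))). intros n Hn. unfold R_dist. rewrite Rminus_0_r.
  apply le_INR in Hn. rewrite INR_IZR_INZ, Z2Nat.id in Hn by exact Hz.
  pose proof (pos_INR n).
  set (s := sqrt (INR n + 1)).
  assert (Hs2 : s * s = INR n + 1) by (apply sqrt_sqrt; lra).
  assert (HsM : M < s) by (apply Rsqr_incrst_0; unfold Rsqr; [| lra |]; [lra | apply sqrt_pos]).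
  assert (Hln : 0 <= ln (INR n + 1) < 2 * s)
    by (split; [rewrite <- ln_1; apply ln_le | apply ln_lt_2sqrt]; lra).
  assert (Hd : INR (2 * n + 1) = 2 * (s * s) - 1) by (rewrite Hs2, plus_INR, mult_INR; simpl; ring).
  assert (HMe : M * eps = Rabs c + 2) by (unfold M; field; lra).
  assert (Hden : 0 < 2 * (s * s) - 1) by nra.
  unfold Rdiv. rewrite Hd, Rabs_mult, Rabs_inv, (Rabs_right (2 * (s * s) - 1)) by lra.
  apply (Rmult_lt_reg_r (2 * (s * s) - 1)); [exact Hden |].
  rewrite Rmult_assoc, Rinv_l by lra.
  pose proof (Rabs_triang c (ln (INR n + 1))) as Htri.
  rewrite (Rabs_right (ln _)) in Htri by lra.
  assert (Hs1 : 1 <= s) by nra.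
  assert (Hkey : (Rabs c + 2) * s < eps * (s * s)).
  { rewrite <- HMe. assert (0 < (s - M) * (eps * s)) by (apply Rmult_lt_0_compat; nra).
    nra. }
  pose proof (Rabs_pos c). nra.
Qed.

Lemma is_inf_unique (E : R -> Prop) (a b : R) : is_inf E a -> is_inf E b -> a = b.
Proof. intros [Ha1 Ha2] [Hb1 Hb2]. apply Rle_antisym; [apply Hb2 | apply Ha2]; assumption. Qed.

Lemma is_inf_range_ext (f g : R -> R) (a : R) : (forall t, f t = g t) ->
  is_inf (fun x => exists t, x = f t) a -> is_inf (fun x => exists t, x = g t) a.
Proof.
  intros Hfg [Hlow Hglb]. split.
  - intros x [t ->]. apply Hlow. exists t. symmetry; apply Hfg.
  - intros b Hb. apply Hglb. intros x [t ->]. apply Hb. exists t. apply Hfg.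
Qed.

Lemma is_inf_range_le (f g : R -> R) (a b : R) : (forall t, f t <= g t) ->
  is_inf (fun x => exists t, x = f t) a -> is_inf (fun x => exists t, x = g t) b -> a <= b.
Proof.
  intros Hfg [Ha _] [_ Hb]. apply Hb. intros x [t ->].
  apply Rle_trans with (f t); [apply Ha; now exists t | apply Hfg].
Qed.

Lemma is_inf_ln_two_point (p : R) : 0 < p < 1 ->
  is_inf (fun x => exists t, x = ln (p * exp t + (1 - p) * exp (- t)))
         (ln (2 * sqrt (p * (1 - p)))).
Proof.
  intros Hp. assert (Hs : 0 < sqrt (p * (1 - p))) by (apply sqrt_lt_R0; nra).
  split.
  - intros x [t ->]. apply ln_le; [lra |].
    set (a := exp t). rewrite exp_Ropp. fold a.
    assert (Ha : 0 < a) by apply exp_pos.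
    set (b := / a). assert (Hab : a * b = 1) by (unfold b; field; lra).
    assert (Hb : 0 < b) by (apply Rinv_0_lt_compat; exact Ha).
    assert (Hss : sqrt (p * (1 - p)) * sqrt (p * (1 - p)) = p * (1 - p)) by (apply sqrt_sqrt; nra).
    assert (Hsq : 0 <= (p * a - (1 - p) * b) * (p * a - (1 - p) * b)) by apply Rle_0_sqr.
    assert (0 < p * a + (1 - p) * b) by nra.
    nra.
  - intros m Hm. apply Hm. exists (ln (sqrt ((1 - p) / p))).
    assert (HE : 0 < sqrt ((1 - p) / p)) by (apply sqrt_lt_R0, Rdiv_lt_0_compat; lra).
    rewrite exp_Ropp, exp_ln, <- balanced_tilt by assumption.
    f_equal. field. lra.
Qed.

Lemma rate_It_fun_vote_p (rho t : R) :
  rate_It_fun rho t = ln (vote_p rho * exp t + (1 - vote_p rho) * exp (- t)).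
Proof. unfold rate_It_fun, vote_p. f_equal. field. Qed.

Lemma rate_I_fun_le_rate_It_fun (rho t : R) : 0 < rho < / 2 ->
  rate_I_fun rho t <= rate_It_fun rho t.
Proof.
  intros Hrho. unfold rate_I_fun, rate_It_fun.
  set (a := exp t). rewrite exp_Ropp. fold a.
  assert (Ha : 0 < a) by apply exp_pos.
  set (b := / a). assert (Hab : a * b = 1) by (unfold b; field; lra).
  assert (Hb : 0 < b) by (apply Rinv_0_lt_compat; exact Ha).
  assert (Hq : 0 < 1 - 2 * rho + 2 * rho ^ 2) by nra.
  apply ln_le.
  - assert (0 < rho * (1 - rho) * a) by (apply Rmult_lt_0_compat; nra).
    assert (0 < / 2 * (1 - 2 * rho + 2 * rho ^ 2) * b) by (apply Rmult_lt_0_compat; lra).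
    lra.
  - assert (Hab2 : 2 <= a + b).
    { pose proof (Rle_0_sqr (a - b)). unfold Rsqr in *.
      assert (4 <= (a + b) * (a + b)) by nra. nra. }
    match goal with |- ?l <= ?r => replace r with (l + (a + b - 2) / 4) by field end.
    lra.
Qed.

Lemma class2_prob_pos (p : R) (n : nat) : 0 < p < 1 -> 0 < class2_prob p (2 * n + 1).
Proof.
  intros Hp. eapply Rlt_le_trans; [| apply class2_prob_lower; lra].
  pose proof (pos_INR n).
  apply Rdiv_lt_0_compat; [apply Rmult_lt_0_compat; [| apply pow_lt] |]; nra.
Qed.

Lemma ln_class2_prob_upper (p : R) (n : nat) : 0 < p <= / 2 ->
  ln (class2_prob p (2 * n + 1)) <= INR (2 * n + 1) * ln (2 * sqrt (p * (1 - p))).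
Proof.
  intros Hp. rewrite <- ln_pow by (apply Rmult_lt_0_compat; [lra | apply sqrt_lt_R0; nra]).
  apply ln_le; [apply class2_prob_pos; lra | now apply class2_prob_upper].
Qed.

Lemma ln_class2_prob_lower (p : R) (n : nat) : 0 < p <= / 2 ->
  2 * INR n * ln (2 * sqrt (p * (1 - p))) + ln p - ln (INR n + 1)
  <= ln (class2_prob p (2 * n + 1)).
Proof.
  intros Hp. pose proof (pos_INR n).
  assert (Hs : 0 < 2 * sqrt (p * (1 - p))) by (apply Rmult_lt_0_compat; [lra | apply sqrt_lt_R0; nra]).
  assert (Hs2 : 4 * p * (1 - p) = (2 * sqrt (p * (1 - p))) ^ 2).
  { simpl. replace (2 * sqrt (p * (1 - p)) * (2 * sqrt (p * (1 - p)) * 1))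
      with (4 * (sqrt (p * (1 - p)) * sqrt (p * (1 - p)))) by ring.
    rewrite sqrt_sqrt by nra. ring. }
  eapply Rle_trans; [| apply ln_le; [| apply class2_prob_lower; lra]].
  - rewrite Hs2, <- pow_mult. set (s := 2 * sqrt (p * (1 - p))) in *.
    assert (Hsn : 0 < s ^ (2 * n)) by now apply pow_lt.
    assert (Hn1 : 0 < / (INR n + 1)) by (apply Rinv_0_lt_compat; lra).
    unfold Rdiv. rewrite ln_mult, ln_mult, ln_Rinv, ln_pow, mult_INR by nra.
    simpl INR. lra.
  - apply Rdiv_lt_0_compat; [apply Rmult_lt_0_compat; [| apply pow_lt] |]; nra.
Qed.

Lemma ln_class2_prob_bounds (p : R) (n : nat) : 0 < p <= / 2 ->
  let r := ln (2 * sqrt (p * (1 - p))) in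
  r - (r - ln p + ln (INR n + 1)) / INR (2 * n + 1)
  <= / INR (2 * n + 1) * ln (class2_prob p (2 * n + 1)) <= r.
Proof.
  intros Hp r.
  pose proof (ln_class2_prob_lower p n Hp) as Hlow.
  pose proof (ln_class2_prob_upper p n Hp) as Hup. fold r in Hlow, Hup.
  assert (Hd : INR (2 * n + 1) = 2 * INR n + 1) by (rewrite plus_INR, mult_INR; simpl; ring).
  pose proof (pos_INR n).
  rewrite Hd in *. split; apply (Rmult_le_reg_l (2 * INR n + 1)); try lra;
    rewrite <- Rmult_assoc, Rinv_r, Rmult_1_l by lra; [| exact Hup].
  replace ((2 * INR n + 1) * (r - (r - ln p + ln (INR n + 1)) / (2 * INR n + 1)))
    with (2 * INR n * r + ln p - ln (INR n + 1)) by (field; lra).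
  exact Hlow.
Qed.

Theorem mainTheorem2 (rho I It : R) :
  0 < rho < / 2 ->
  is_inf (fun x => exists t : R, x = rate_I_fun rho t) (- I) ->
  is_inf (fun x => exists t : R, x = rate_It_fun rho t) (- It) ->
  Un_cv (fun n : nat =>
           / INR (2 * n + 1) * ln (modelA_prob_class2 rho (2 * n + 1) (2 * n + 1)))
        (- It)
  /\ I >= It.
Proof.
  intros Hrho HI HIt.
  set (p := vote_p rho).
  assert (Hp : / 4 < p < / 2) by (unfold p, vote_p; split; nra).
  assert (HIt_val : - It = ln (2 * sqrt (p * (1 - p)))).
  { apply (is_inf_unique _ _ _ HIt).
    apply (is_inf_range_ext _ _ _ (fun t => eq_sym (rate_It_fun_vote_p rho t))).
    apply is_inf_ln_two_point. lra. }
  split.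
  - rewrite HIt_val. set (r := ln (2 * sqrt (p * (1 - p)))).
    apply (Un_cv_squeeze _ (fun n => (r - ln p + ln (INR n + 1)) / INR (2 * n + 1))).
    + intros n. rewrite modelA_prob_class2_diag by lia.
      apply ln_class2_prob_bounds. fold p. lra.
    + apply Un_cv_ln_div_odd.
  - assert (- I <= - It)
      by exact (is_inf_range_le _ _ _ _ (fun t => rate_I_fun_le_rate_It_fun rho t Hrho) HI HIt).
    lra.
Qed.
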